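(* Let $G=(V,E)$ be an undirected graph with vertex set $V=\{v_1,\dots,v_n\}$ and edge set $E=\{e_{i_1j_1},\dots,e_{i_mj_m}\}$, where $e_{i_kj_k}$ joins $v_{i_k}$ and $v_{j_k}$. Each edge $e_{i_kj_k}$ carries a vector $C_{i_kj_k}\in\mathbb{R}^q$, and $\{p_\theta\}$ is a family of functions $\mathbb{R}^q\to(0,\infty)$ depending differentiably on a parameter vector $\theta\in\mathbb{R}^{n_\theta}$. For each $\theta$, let $G_\theta$ be the weighted graph on $(V,E)$ with edge weights $w_{i_kj_k}=p_\theta(C_{i_kj_k})$, and let $L_\theta$ be its Laplacian. Let $S\subseteq V$ and let $F\in\mathbb{R}^{|S|\times|S|}$ be a given matrix with zero diagonal, with entries $F_{lk}$ indexed by $v_l,v_k\in S$. Define $$\mathcal{L}(\theta)=\|R_S(\theta)-F\|_F^2=\sum_{v_l,v_k\in S}\big(R_S(\theta)_{lk}-F_{lk}\big)^2,$$ where $R_S(\theta)_{lk}=b_{lk}^TL_\theta^+b_{lk}$ is the effective resistance between $v_l$ and $v_k$ in $G_\theta$. Let $J\in\mathbb{R}^{m\times n_\theta}$ be the Jacobian $J_{k,h}=\frac{\partial w_{i_kj_k}}{\partial\theta_h}$, and let $B\in\mathbb{R}^{m\times n}$ be the edge–vertex incidence matrix whose $k$-th row is $e_{i_k}-e_{j_k}$ (standard basis vectors of $\mathbb{R}^n$). Then $$\nabla_\theta\mathcal{L}=\sum_{v_l,v_k\in S}\big(F_{lk}-b_{lk}^TL_\theta^+b_{lk}\big)\cdot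 2J^T\,(BL_\theta^+b_{lk})^{\circ 2},$$ where $^{\circ 2}$ denotes the entrywise square of a vector.
   Context: For a weighted undirected graph with weights $w_{ij}$ on edges $e_{ij}$, the degree matrix $D$ is diagonal with $D_{ii}=\sum_{j:e_{ij}\in E}w_{ij}$, the adjacency matrix $A$ has $A_{ij}=A_{ji}=w_{ij}$ for $e_{ij}\in E$ and $0$ otherwise, and the Laplacian is $L=D-A$. $L^+$ denotes the Moore–Penrose pseudoinverse. For nodes $v_i,v_j$, $b_{ij}\in\mathbb{R}^n$ is the vector with $1$ in position $i$, $-1$ in position $j$, and $0$ elsewhere; the effective resistance between $v_i$ and $v_j$ is $R_{ij}=b_{ij}^TL^+b_{ij}$. $\|\cdot\|_F$ is the Frobenius norm. *)

From HB Require Import structures.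
From mathcomp Require Import all_boot all_order all_algebra.
From mathcomp Require Import all_classical all_reals all_analysis.
Set Implicit Arguments. Unset Strict Implicit. Unset Printing Implicit Defensive.
Import Order.TTheory GRing.Theory Num.Theory.
Import numFieldNormedType.Exports.
Local Open Scope ring_scope.

Section Graph.
Variable R : realType.

Definition is_MP_pinv n (A X : 'M[R]_n) : Prop :=
  [/\ A *m X *m A = A, X *m A *m X = X,
      (A *m X)^T = A *m X & (X *m A)^T = X *m A].

(* The Moore-Penrose pseudoinverse (it exists and is unique). *)
Definition MP_pinv n (A : 'M[R]_n) : 'M[R]_n := xget 0 (fun X => is_MP_pinv A X).

Definition degree_mx n m (ei ej : 'I_m -> 'I_n) (w : 'I_m -> R) : 'M[R]_n :=
  \matrix_(i, j) (if i == j then \sum_(k < m | (ei k == i) || (ej k == i)) w k else 0).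

Definition adjacency_mx n m (ei ej : 'I_m -> 'I_n) (w : 'I_m -> R) : 'M[R]_n :=
  \matrix_(i, j) \sum_(k < m | ((ei k == i) && (ej k == j)) || ((ei k == j) && (ej k == i))) w k.

Definition laplacian_mx n m (ei ej : 'I_m -> 'I_n) (w : 'I_m -> R) : 'M[R]_n :=
  degree_mx ei ej w - adjacency_mx ei ej w.

Definition bvec n (i j : 'I_n) : 'cV[R]_n := delta_mx i 0 - delta_mx j 0.

Definition eff_res n (L : 'M[R]_n) (i j : 'I_n) : R :=
  ((bvec i j)^T *m MP_pinv L *m bvec i j) 0 0.

Definition incidence_mx n m (ei ej : 'I_m -> 'I_n) : 'M[R]_(m, n) :=
  \matrix_(k, v) ((v == ei k)%:R - (v == ej k)%:R).

Definition basis_rv p (h : 'I_p) : 'rV[R]_p := delta_mx 0 h.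

End Graph.

From HB Require Import structures.
From mathcomp Require Import all_boot all_order all_algebra.
From mathcomp Require Import all_classical all_reals all_analysis.
From mathcomp Require Import ring.
Set Implicit Arguments. Unset Strict Implicit. Unset Printing Implicit Defensive.
Import Order.TTheory GRing.Theory Num.Theory.
Import numFieldNormedType.Exports.
Local Open Scope classical_set_scope.
Local Open Scope ring_scope.

(* Let P be the orthogonal projector onto ker B.  For positive weights
   L = B^T diag(w) B has kernel ker B, so L + P is invertible and
   L^+ = (L + P)^-1 - P, where P does not depend on the weights.  The resolvent
   identity (L1 + P)^-1 - (L0 + P)^-1 = -(L1 + P)^-1 B^T diag(w1 - w0) B (L0 + P)^-1
   and B P = 0 then give the directional derivative of b^T L^+ b as
   -sum_k (dw_k) ((B L^+ b)_k)^2, and the chain rule for the squared residuals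
   gives the gradient of the loss. *)

Lemma form_trmx_diag (R : comRingType) p q (M : 'M[R]_(p, q)) (d : 'rV[R]_p)
    (y z : 'cV[R]_q) :
  (y^T *m (M^T *m diag_mx d *m M) *m z) 0 0 =
  \sum_k (M *m y) k 0 * d 0 k * (M *m z) k 0.
Proof.
rewrite !mulmxA -trmx_mul -mulmxA mul_mx_diag !mxE.
by apply: eq_bigr => k _; rewrite !mxE.
Qed.

Lemma invmxB (R : comUnitRingType) k (A C : 'M[R]_k) :
  A \in unitmx -> C \in unitmx ->
  invmx A - invmx C = invmx A *m (C - A) *m invmx C.
Proof.
move=> A_unit C_unit.
by rewrite mulmxBr mulmxBl mulVmx // mul1mx -mulmxA mulmxV // mulmx1.
Qed.

Section MoorePenrose.
Variable R : realType.

Lemma is_MP_pinv_uniq n (A X Y : 'M[R]_n) :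
  is_MP_pinv A X -> is_MP_pinv A Y -> X = Y.
Proof.
case=> [AXA XAX AXs XAs] [AYA YAY AYs YAs].
have XAY_X : X *m A *m Y = X.
  have -> : X *m A *m Y = X *m (A *m X)^T *m (A *m Y)^T.
    by rewrite AXs AYs !mulmxA XAX.
  by rewrite -mulmxA -trmx_mul !mulmxA AYA AXs mulmxA XAX.
have XAY_Y : X *m A *m Y = Y.
  have -> : X *m A *m Y = (X *m A)^T *m (Y *m A)^T *m Y.
    by rewrite XAs YAs -{1}YAY !mulmxA.
  by rewrite -trmx_mul -(mulmxA Y) (mulmxA A) AXA YAs YAY.
by rewrite -XAY_X XAY_Y.
Qed.

Lemma MP_pinvE n (A X : 'M[R]_n) : is_MP_pinv A X -> MP_pinv A = X.
Proof.
move=> AX; apply: (xget_unique _ AX) => Y AY; exact: is_MP_pinv_uniq AY AX.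
Qed.

Lemma is_MP_pinv_shift n (A P : 'M[R]_n) :
  P *m P = P -> P^T = P -> A *m P = 0 -> P *m A = 0 -> A + P \in unitmx ->
  is_MP_pinv A (invmx (A + P) - P).
Proof.
move=> PP Ps AP PA U; set N := invmx (A + P).
have PN : P *m N = P.
  have PAP : P *m (A + P) = P by rewrite mulmxDr PA PP add0r.
  by rewrite -[in LHS]PAP -mulmxA mulmxV ?mulmx1.
have NP : N *m P = P.
  have APP : (A + P) *m P = P by rewrite mulmxDl AP PP add0r.
  by rewrite -[in LHS]APP mulmxA mulVmx ?mul1mx.
have AX : A *m (N - P) = 1%:M - P.
  by rewrite mulmxBr AP subr0 -[A](addrK P) mulmxBl mulmxV // PN.
have XA : (N - P) *m A = 1%:M - P.
  by rewrite mulmxBl PA subr0 -[A](addrK P) mulmxBr mulVmx // NP.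
split.
- by rewrite AX mulmxBl mul1mx PA subr0.
- by rewrite XA mulmxBl mul1mx mulmxBr PN PP subrr subr0.
- by rewrite AX linearB /= trmx1 Ps.
- by rewrite XA linearB /= trmx1 Ps.
Qed.

End MoorePenrose.

Section OrthogonalProjection.
Variable R : realType.

Lemma mulmx_tr_self_eq0 r (x : 'rV[R]_r) : (x *m x^T) 0 0 = 0 -> x = 0.
Proof.
rewrite mxE => /eqP; rewrite psumr_eq0 => [/allP x0|i _]; last first.
  by rewrite mxE -expr2 sqr_ge0.
apply/rowP => i; move/implyP: (x0 i (mem_index_enum _)) => /(_ isT).
by rewrite mxE -expr2 sqrf_eq0 mxE => /eqP.
Qed.

Lemma gram_unitmx r c (K : 'M[R]_(r, c)) : row_free K -> K *m K^T \in unitmx.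
Proof.
move=> freeK; rewrite -row_free_unit; apply: inj_row_free => u uKK0.
have /mulmx_tr_self_eq0/eqP : ((u *m K) *m (u *m K)^T) 0 0 = 0.
  by rewrite trmx_mul !mulmxA -(mulmxA u) uKK0 mul0mx mxE.
by rewrite mulmx_free_eq0 // => /eqP.
Qed.

Definition orthoproj r c (K : 'M[R]_(r, c)) : 'M[R]_c :=
  K^T *m invmx (K *m K^T) *m K.

Variables (r c : nat) (K : 'M[R]_(r, c)).
Hypothesis freeK : row_free K.
Local Notation P := (orthoproj K).

Lemma orthoproj_tr : P^T = P.
Proof. by rewrite !trmx_mul trmxK trmx_inv trmx_mul trmxK mulmxA. Qed.

Lemma orthoproj_fix p (D : 'M[R]_(p, r)) : D *m K *m P = D *m K.
Proof.
by rewrite !mulmxA -(mulmxA D) -(mulmxA D) mulmxV ?mulmx1 ?gram_unitmx.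
Qed.

Lemma orthoproj_idem : P *m P = P.
Proof. by rewrite {1}/orthoproj orthoproj_fix. Qed.

Lemma orthoproj_id (u : 'rV[R]_c) : (u <= K)%MS -> u *m P = u.
Proof. by case/submxP => D ->; exact: orthoproj_fix. Qed.

Lemma mulmx_orthoproj_eq0 m (A : 'M[R]_(m, c)) : A *m K^T = 0 -> A *m P = 0.
Proof. by move=> AK0; rewrite !mulmxA AK0 !mul0mx. Qed.

End OrthogonalProjection.

Section Laplacian.
Variables (R : realType) (n m : nat) (ei ej : 'I_m -> 'I_n).
Hypothesis no_loop : forall k, ei k != ej k.
Local Notation B := (incidence_mx R ei ej).
Local Notation L := (laplacian_mx ei ej).

Lemma laplacian_mxE (w : 'I_m -> R) : L w = B^T *m diag_mx (\row_k w k) *m B.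
Proof.
apply/matrixP => i j; rewrite mul_mx_diag !mxE.
have -> : (if i == j then \sum_(k | (ei k == i) || (ej k == i)) w k else 0)
    = \sum_k (if i == j then (if (ei k == i) || (ej k == i) then w k else 0) else 0).
  by case: (i == j); [rewrite big_mkcond | rewrite big1].
rewrite [X in _ - X]big_mkcond -sumrB; apply: eq_bigr => k _; rewrite !mxE.
rewrite ![ei k == _]eq_sym ![ej k == _]eq_sym.
move: (no_loop k); move: (ei k) (ej k) => a b /negbTE ab.
have [<-|ij] := eqVneq i j.
  case: (eqVneq i a) => [ia|_]; case: (eqVneq i b) => [ib|_] /=; try ring.
case: (eqVneq i a) => [ia|_]; case: (eqVneq i b) => [ib|_];
  case: (eqVneq j a) => [ja|_]; case: (eqVneq j b) => [jb|_] /=; try ring.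
all: by subst; rewrite eqxx in ab ij.
Qed.

Lemma laplacian_mx_tr (w : 'I_m -> R) : (L w)^T = L w.
Proof. by rewrite laplacian_mxE !trmx_mul trmxK tr_diag_mx mulmxA. Qed.

Lemma laplacian_mxB (w1 w2 : 'I_m -> R) :
  L w1 - L w2 = B^T *m diag_mx (\row_k (w1 k - w2 k)) *m B.
Proof.
have -> : \row_k (w1 k - w2 k) = \row_k w1 k - \row_k w2 k.
  by apply/rowP => k; rewrite !mxE.
by rewrite !laplacian_mxE [diag_mx (_ - _)]linearB /= mulmxBr mulmxBl.
Qed.

Local Notation K := (row_base (kermx B^T)).
Local Notation P := (orthoproj K).

Lemma incidence_kerproj : B *m P = 0.
Proof.
apply: mulmx_orthoproj_eq0; apply: trmx_inj; rewrite trmx_mul trmxK trmx0.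
by apply/sub_kermxP; rewrite eq_row_base.
Qed.

Lemma laplacian_kerproj (w : 'I_m -> R) : L w *m P = 0.
Proof. by rewrite laplacian_mxE -mulmxA incidence_kerproj mulmx0. Qed.

Lemma kerproj_laplacian (w : 'I_m -> R) : P *m L w = 0.
Proof.
by rewrite -[P]orthoproj_tr -[L w]laplacian_mx_tr -trmx_mul laplacian_kerproj trmx0.
Qed.

Lemma laplacian_quad_form (w : 'I_m -> R) (y z : 'cV[R]_n) :
  (y^T *m L w *m z) 0 0 = \sum_k (B *m y) k 0 * w k * (B *m z) k 0.
Proof.
by rewrite laplacian_mxE form_trmx_diag; under eq_bigr do rewrite [X in _ * X * _]mxE.
Qed.

Lemma laplacian_add_kerproj_unit (w : 'I_m -> R) :
  (forall k, 0 < w k) -> L w + P \in unitmx.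
Proof.
move=> w_gt0; rewrite -row_free_unit; apply: inj_row_free => u uLP0.
have uP0 : u *m P = 0.
  have : u *m (L w + P) *m P = 0 by rewrite uLP0 mul0mx.
  by rewrite -mulmxA mulmxDl laplacian_kerproj orthoproj_idem ?row_base_free ?add0r.
have uL0 : u *m L w = 0 by move: uLP0; rewrite mulmxDr uP0 addr0.
have Bu0 : B *m u^T = 0.
  have : (u^T^T *m L w *m u^T) 0 0 = 0 by rewrite trmxK uL0 mul0mx mxE.
  rewrite laplacian_quad_form => /eqP; rewrite psumr_eq0 => [/allP Bu0|k _].
    apply/colP => k; rewrite [RHS]mxE.
    move/implyP: (Bu0 k (mem_index_enum _)) => /(_ isT).
    by rewrite mulrC mulrA -expr2 mulf_eq0 sqrf_eq0 (gt_eqF (w_gt0 k)) orbF => /eqP.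
  by rewrite mulrC mulrA -expr2 mulr_ge0 ?sqr_ge0 ?ltW.
have uK : (u <= K)%MS.
  rewrite eq_row_base; apply/sub_kermxP.
  by rewrite -[u]trmxK -trmx_mul Bu0 trmx0.
by rewrite -(orthoproj_id (row_base_free _) uK) uP0.
Qed.

Lemma MP_pinv_laplacian (w : 'I_m -> R) : (forall k, 0 < w k) ->
  MP_pinv (L w) = invmx (L w + P) - P.
Proof.
move=> w_gt0; apply/MP_pinvE/is_MP_pinv_shift.
- exact/orthoproj_idem/row_base_free.
- exact: orthoproj_tr.
- exact: laplacian_kerproj.
- exact: kerproj_laplacian.
- exact: laplacian_add_kerproj_unit.
Qed.

End Laplacian.

Section MatrixLimits.
Variables (R : realType) (T : Type) (F : set_system T).
Context {FF : Filter F}.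

Lemma cvg_sumr (I : finType) (P : pred I) (f : I -> T -> R) (a : I -> R) :
  (forall i, f i @ F --> a i) ->
  (fun t => \sum_(i | P i) f i t) @ F --> \sum_(i | P i) a i.
Proof. by move=> fa; apply: cvg_big => //; exact: add_continuous. Qed.

Lemma cvg_prodr (I : finType) (P : pred I) (f : I -> T -> R) (a : I -> R) :
  (forall i, f i @ F --> a i) ->
  (fun t => \prod_(i | P i) f i t) @ F --> \prod_(i | P i) a i.
Proof. by move=> fa; apply: cvg_big => //; exact: mul_continuous. Qed.

Definition mx_cvg p q (A : T -> 'M[R]_(p, q)) (A0 : 'M[R]_(p, q)) :=
  forall i j, (fun t => A t i j) @ F --> A0 i j.

Lemma mx_cvg_cst p q (A0 : 'M[R]_(p, q)) : mx_cvg (fun _ => A0) A0.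
Proof. by move=> i j; exact: cvg_cst. Qed.

Lemma mx_cvgD p q (A C : T -> 'M[R]_(p, q)) A0 C0 :
  mx_cvg A A0 -> mx_cvg C C0 -> mx_cvg (fun t => A t + C t) (A0 + C0).
Proof.
move=> AA0 CC0 i j; under eq_cvg do rewrite mxE.
by rewrite mxE; apply: cvgD; [exact: AA0 | exact: CC0].
Qed.

Lemma mx_cvgM p q r (A : T -> 'M[R]_(p, q)) (C : T -> 'M[R]_(q, r)) A0 C0 :
  mx_cvg A A0 -> mx_cvg C C0 -> mx_cvg (fun t => A t *m C t) (A0 *m C0).
Proof.
move=> AA0 CC0 i j; under eq_cvg do rewrite mxE.
by rewrite mxE; apply: cvg_sumr => k; apply: cvgM; [exact: AA0 | exact: CC0].
Qed.

Lemma cvg_det k (A : T -> 'M[R]_k) A0 :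
  mx_cvg A A0 -> (fun t => \det (A t)) @ F --> \det A0.
Proof.
move=> AA0; apply: cvg_sumr => s; apply: cvgM; first exact: cvg_cst.
by apply: cvg_prodr => i; exact: AA0.
Qed.

Lemma mx_cvg_inv k (A : T -> 'M[R]_k) A0 :
  (forall t, A t \in unitmx) -> A0 \in unitmx ->
  mx_cvg A A0 -> mx_cvg (fun t => invmx (A t)) (invmx A0).
Proof.
move=> At_unit A0_unit AA0 i j.
under eq_cvg do rewrite /invmx At_unit mxE.
rewrite /invmx A0_unit mxE; apply: cvgM.
  by apply: cvgV; [rewrite -unitfE -unitmxE | exact: cvg_det].
under eq_cvg do rewrite mxE.
rewrite mxE; apply: cvgM; first exact: cvg_cst.
apply: cvg_det => a b; under eq_cvg do rewrite !mxE.
by rewrite !mxE; exact: AA0.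
Qed.

End MatrixLimits.

Section ResistanceDerivative.
Variables (R : realType) (V : normedModType R) (n m : nat) (ei ej : 'I_m -> 'I_n).
Hypothesis no_loop : forall k, ei k != ej k.
Variables (w : V -> 'I_m -> R) (x v : V).
Hypothesis w_gt0 : forall y k, 0 < w y k.
Hypothesis w_derivable : forall k, derivable (w^~ k) x v.

Local Notation B := (incidence_mx R ei ej).
Local Notation L y := (laplacian_mx ei ej (w y)).
Local Notation P := (orthoproj (row_base (kermx B^T))).
Local Notation N y := (invmx (L y + P)).

Let LP_unit y : L y + P \in unitmx.
Proof. exact: laplacian_add_kerproj_unit. Qed.

Lemma weight_cvg_line k : (fun t : R => w (t *: v + x) k) @ 0^' --> w x k.
Proof.
move: (@w_derivable k) => /derivable1P/derivable1_diffP/differentiable_continuous.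
by move=> /continuous_withinNx; rewrite scale0r add0r.
Qed.

Lemma inv_laplacian_kerproj_cvg : mx_cvg 0^' (fun t : R => N (t *: v + x)) (N x).
Proof.
apply: mx_cvg_inv => //; apply: mx_cvgD; last exact: mx_cvg_cst.
under [X in mx_cvg _ X]funext do rewrite laplacian_mxE //.
rewrite laplacian_mxE //; apply: mx_cvgM; last exact: mx_cvg_cst.
apply: mx_cvgM; first exact: mx_cvg_cst.
move=> i j; under eq_cvg do rewrite !mxE; rewrite !mxE.
by case: (i == j); [exact: weight_cvg_line | exact: cvg_cst].
Qed.

Lemma is_derive_pinv_laplacian_form (b : 'cV[R]_n) :
  is_derive x v (fun y => (b^T *m MP_pinv (L y) *m b) 0 0)
    (- \sum_k 'D_v (w^~ k) x * ((B *m MP_pinv (L x) *m b) k 0) ^+ 2).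
Proof.
set f := fun y => _.
have pinvE y : MP_pinv (L y) = N y - P by exact: MP_pinv_laplacian.
have N_tr y : (N y)^T = N y.
  by rewrite trmx_inv linearD /= laplacian_mx_tr // orthoproj_tr.
have BNE : B *m N x *m b = B *m MP_pinv (L x) *m b.
  by rewrite pinvE mulmxBr incidence_kerproj subr0.
have f_diff y : f y - f x =
    - \sum_k (B *m N y *m b) k 0 * (w y k - w x k) * (B *m N x *m b) k 0.
  have -> : f y - f x = (b^T *m (N y - N x) *m b) 0 0.
    by rewrite /f !pinvE !mulmxBr !mulmxBl !mxE; ring.
  rewrite invmxB // opprD addrACA subrr addr0 -opprB laplacian_mxB //.
  rewrite mulmxN mulNmx mulmxN mulNmx [LHS]mxE; congr (- _).
  set M := B^T *m _ *m B.
  have -> : b^T *m (N y *m M *m N x) *m b = (N y *m b)^T *m M *m (N x *m b).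
    by rewrite trmx_mul N_tr !mulmxA.
  rewrite form_trmx_diag !mulmxA.
  by apply: eq_bigr => k _; rewrite [X in _ * X * _]mxE.
have quot_cvg : (fun t : R => t^-1 *: (f (t *: v + x) - f x)) @ 0^' -->
    - \sum_k (B *m N x *m b) k 0 * 'D_v (w^~ k) x * (B *m N x *m b) k 0.
  under eq_cvg do rewrite f_diff scalerN scaler_sumr; apply: cvgN.
  apply: cvg_sumr => k; under eq_cvg do rewrite scalerAl scalerAr.
  apply: cvgM; last exact: cvg_cst.
  apply: cvgM; last exact: (@w_derivable k).
  apply: mx_cvgM; last exact: mx_cvg_cst.
  by apply: mx_cvgM; [exact: mx_cvg_cst | exact: inv_laplacian_kerproj_cvg].
apply: DeriveDef; first by apply/cvg_ex; eexists; exact: quot_cvg.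
apply: etrans (cvg_lim _ quot_cvg) _ => //; rewrite -BNE; congr (- _).
by apply: eq_bigr => k _; rewrite mulrC mulrA -expr2 mulrC.
Qed.

End ResistanceDerivative.

Theorem proposition1 (R : realType) (n m q ntheta : nat)
  (ei ej : 'I_m -> 'I_n)
  (Hloop : forall k, ei k != ej k)
  (Hsimple : forall k k', ((ei k == ei k') && (ej k == ej k')) ||
                          ((ei k == ej k') && (ej k == ei k')) -> k = k')
  (C : 'I_m -> 'rV[R]_q)
  (p : 'rV[R]_ntheta -> 'rV[R]_q -> R)
  (Hpos : forall theta c, 0 < p theta c)
  (Hdiff : forall c th, differentiable (fun theta => p theta c) th)
  (S : {set 'I_n})
  (F : 'M[R]_#|S|)
  (HF0 : forall l, F l l = 0)
  (theta : 'rV[R]_ntheta) :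
  let w := fun th (k : 'I_m) => p th (C k) in
  let Lap := fun th => laplacian_mx ei ej (w th) in
  let vS := fun l : 'I_#|S| => enum_val l in
  let loss := fun th =>
    \sum_(l < #|S|) \sum_(k < #|S|) (eff_res (Lap th) (vS l) (vS k) - F l k) ^+ 2 in
  let J : 'M[R]_(m, ntheta) :=
    \matrix_(k, h) 'D_(basis_rv R h) (fun th => w th k) theta in
  let B := incidence_mx R ei ej in
  (forall h, derivable loss theta (basis_rv R h)) /\
  \col_(h < ntheta) 'D_(basis_rv R h) loss theta =
  \sum_(l < #|S|) \sum_(k < #|S|)
     (F l k - eff_res (Lap theta) (vS l) (vS k)) *:
     (2%:R *: (J^T *m map_mx (fun x => x ^+ 2)
                 (B *m MP_pinv (Lap theta) *m bvec R (vS l) (vS k)))).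
Proof.
move=> w Lap vS loss J B.
pose res l k th := eff_res (Lap th) (vS l) (vS k).
pose Y l k := B *m MP_pinv (Lap theta) *m bvec R (vS l) (vS k).
pose dres h l k := - \sum_e J e h * (Y l k e 0) ^+ 2.
have res_derive h l k : is_derive theta (basis_rv R h) (res l k) (dres h l k).
  rewrite /dres /J; under eq_bigr do rewrite mxE.
  apply: is_derive_pinv_laplacian_form => // [th e|e]; first exact: Hpos.
  exact/diff_derivable/Hdiff.
have loss_derive h : is_derive theta (basis_rv R h) loss
    (\sum_l \sum_k (2%:R * (res l k theta - F l k)) * dres h l k).
  have -> : loss = \sum_l \sum_k (res l k - cst (F l k)) ^+ 2.
    apply/funext => th; rewrite !fct_sumE.
    by apply: eq_bigr => l _; rewrite fct_sumE.
  apply: is_derive_eq; apply: eq_bigr => l _; apply: eq_bigr => k _.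
  by rewrite subr0 expr1.
split=> [h|]; first by case: (loss_derive h).
apply/colP => h; rewrite mxE; have [_ ->] := loss_derive h.
rewrite summxE; apply: eq_bigr => l _; rewrite summxE; apply: eq_bigr => k _.
have JYE : (J^T *m map_mx (fun x => x ^+ 2) (Y l k)) h 0 =
    \sum_e J e h * Y l k e 0 ^+ 2.
  by rewrite mxE; apply: eq_bigr => e _; rewrite [J^T h e]mxE [map_mx _ _ e 0]mxE.
rewrite scalerA [in RHS]mxE -/(Y l k) JYE /dres -/(res l k theta); ring.
Qed.
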